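(* Let $X=(x_{ij})\in\mathbb{R}^{n\times p}$ with columns $X_1,\dots,X_p$, and let $A$ be a symmetric $n\times n$ $0/1$ matrix (the adjacency matrix of a network on the $n$ rows). For a $p\times p$ matrix $B=(\beta_{kj})$ with columns $\beta_j$, a diagonal matrix $\Omega=\mathrm{diag}(\omega_1^2,\dots,\omega_p^2)$ with $\omega_j>0$, and an $n\times n$ positive definite matrix $\Theta$, define $$S=\frac1p\sum_{j=1}^p\frac{1}{\omega_j^2}(X_j-X\beta_j)(X_j-X\beta_j)^\top,\qquad L(B,\Omega,\Theta\mid X)=-n\log\det D-p\log\det\Theta+\mathrm{Tr}(\Theta S),$$ where $D=\Omega^{-1}=\mathrm{diag}(1/\omega_1^2,\dots,1/\omega_p^2)$. For a DAG $G$ on nodes $\{1,\dots,p\}$, let $(\widehat B(G),\widehat\Omega(G),\widehat\Theta(G))$ denote a minimizer of $L(B,\Omega,\Theta\mid X)$ over all $B$ with $\beta_{kj}=0$ whenever $k\to j$ is not an edge of $G$, all such positive diagonal $\Omega$, and all positive definite $\Theta$ satisfying $\Theta_{ij}=0$ whenever $i\neq j$ and $A_{ij}=0$, and $\mathrm{diag}(\Theta^{-1})=1$ (the maximum likelihood estimate given $G$). Suppose $G_1$ and $G_2$ are two Markov equivalent DAGs on the same $p$ nodes and that the maximum likelihood estimates $(\widehat B(G_m),\widehat\Omega(G_m),\widehat\Theta(G_m))$, $m=1,2$, exist for $X$. Then $$L(\widehat B(G_1),\widehat\Omega(G_1),\widehat\Theta(G_1)\mid X)=L(\widehat B(G_2),\widehat\Omega(G_2),\widehat\Theta(G_2)\mid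 X).$$
   Context: This $L$ is the negative log-likelihood (as defined in the paper) of the model in which $X_j=\sum_{k}\beta_{kj}X_k+\varepsilon_j$ with independent $\varepsilon_j\sim\mathcal{N}_n(0,\omega_j^2\Sigma)$, $\Theta=\Sigma^{-1}$, $\mathrm{diag}(\Sigma)=1$. Two DAGs are Markov equivalent if they encode the same set of conditional independence relations (equivalently, they have the same skeleton and the same v-structures). *)

From HB Require Import structures.
From mathcomp Require Import all_boot all_order all_algebra.
From mathcomp Require Import reals exp.
Set Implicit Arguments. Unset Strict Implicit. Unset Printing Implicit Defensive.
Import Order.TTheory GRing.Theory Num.Theory.
Local Open Scope ring_scope.

(* A directed graph on nodes 'I_p: G k j means the edge k -> j. *)
Definition is_dag (p : nat) (G : rel 'I_p) : Prop :=
  forall x y, G x y -> ~~ connect G y x.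

Definition adjacent (p : nat) (G : rel 'I_p) (x y : 'I_p) : bool := G x y || G y x.

Definition vstructure (p : nat) (G : rel 'I_p) (a c b : 'I_p) : bool :=
  [&& G a c, G b c, a != b & ~~ adjacent G a b].

Definition markov_equivalent (p : nat) (G1 G2 : rel 'I_p) : Prop :=
  (forall x y, adjacent G1 x y = adjacent G2 x y) /\
  (forall a c b, vstructure G1 a c b = vstructure G2 a c b).

Definition posdef (R : realType) (n : nat) (M : 'M[R]_n) : Prop :=
  M^T = M /\ forall v : 'rV[R]_n, v != 0 -> 0 < (v *m M *m v^T) 0 0.

Definition Smat (R : realType) (n p : nat) (X : 'M[R]_(n, p)) (B Omega : 'M[R]_p)
  : 'M[R]_n :=
  (p%:R)^-1 *: \sum_(j < p)
     ((Omega j j)^-1 *: (col j (X - X *m B) *m (col j (X - X *m B))^T)).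

Definition negloglik (R : realType) (n p : nat) (X : 'M[R]_(n, p))
  (B Omega : 'M[R]_p) (Theta : 'M[R]_n) : R :=
  - (n%:R * ln (\det (invmx Omega))) - p%:R * ln (\det Theta)
  + \tr (Theta *m Smat X B Omega).

Definition feasible (R : realType) (n p : nat) (A : 'M[R]_n) (G : rel 'I_p)
  (B Omega : 'M[R]_p) (Theta : 'M[R]_n) : Prop :=
  (forall k j, ~~ G k j -> B k j = 0) /\
  is_diag_mx Omega /\ (forall j, 0 < Omega j j) /\
  posdef Theta /\
  (forall i j, i != j -> A i j = 0 -> Theta i j = 0) /\
  (forall i, (invmx Theta) i i = 1).

Definition is_mle (R : realType) (n p : nat) (X : 'M[R]_(n, p)) (A : 'M[R]_n)
  (G : rel 'I_p) (B Omega : 'M[R]_p) (Theta : 'M[R]_n) : Prop :=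
  feasible A G B Omega Theta /\
  forall B' Omega' Theta', feasible A G B' Omega' Theta' ->
    negloglik X B Omega Theta <= negloglik X B' Omega' Theta'.

From HB Require Import structures.
From mathcomp Require Import all_boot all_order all_algebra.
From mathcomp Require Import reals exp.
From mathcomp Require Import ring zify.
Set Implicit Arguments. Unset Strict Implicit. Unset Printing Implicit Defensive.
Import Order.TTheory GRing.Theory Num.Theory.

(* Two Markov equivalent DAGs are joined by a sequence of reversals of covered
   edges x -> y (those with pa(y) = pa(x) + x), each of which keeps the graph
   Markov equivalent to the target and decreases the number of edges on which
   the two graphs disagree (Chickering 1995).  The likelihood depends on
   (B, Omega) only through det Omega and K = (I - B) Omega^-1 (I - B)^T.
   Reversing a covered edge x -> y amounts to regressing x on y instead of y
   on x: the x- and y-terms of K are the two LDL^T factorisations of the same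
   rank-two form, and the product Omega_xx Omega_yy is unchanged.  Hence every
   feasible point for G1 yields a feasible point for G2 with the same Theta and
   the same likelihood, and conversely, so the two minima coincide. *)

Definition ranking (p : nat) (G : rel 'I_p) (f : 'I_p -> nat) : Prop :=
  forall a b, G a b -> f a < f b.

Section Rankings.
Variables (p : nat) (G : rel 'I_p).

Lemma ranking_path f x s : ranking G f -> path G x s -> f x <= f (last x s).
Proof.
move=> hf; elim: s x => [|y s IH] x //= /andP[hxy hp].
exact/ltnW/(leq_trans (hf _ _ hxy) (IH _ hp)).
Qed.

Lemma ranking_dag f : ranking G f -> is_dag G.
Proof.
move=> hf x y hxy; apply/negP => /connectP[s hp hl].
by have := ranking_path hf hp; rewrite -hl leqNgt hf.
Qed.

Lemma dag_ranking : is_dag G -> exists f, ranking G f.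
Proof.
move=> hG; exists (fun a => #|[set z | connect G z a]|) => a b hab.
apply/proper_card/properP; split.
  apply/subsetP => z; rewrite !inE => hz.
  exact: connect_trans hz (connect1 hab).
by exists b; rewrite !inE ?connect0 ?hG.
Qed.

Lemma ranking_irr f a : ranking G f -> G a a = false.
Proof. by move=> hf; apply/negP => /hf; rewrite ltnn. Qed.

Lemma ranking_asym f a b : ranking G f -> G a b -> G b a = false.
Proof. by move=> hf /hf hab; apply/negP => /hf; rewrite ltnNge ltnW. Qed.

End Rankings.

Lemma markov_equivalent_sym (p : nat) (G G' : rel 'I_p) :
  markov_equivalent G G' -> markov_equivalent G' G.
Proof. by case=> hadj hv; split=> *; rewrite ?hadj ?hv. Qed.

Lemma markov_equivalent_trans (p : nat) (G1 G2 G3 : rel 'I_p) :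
  markov_equivalent G1 G2 -> markov_equivalent G2 G3 ->
  markov_equivalent G1 G3.
Proof. by case=> h1 h2 [h3 h4]; split=> *; rewrite ?h1 ?h2 ?h3 ?h4. Qed.

Lemma adjacent_sym (p : nat) (G : rel 'I_p) a b : adjacent G a b = adjacent G b a.
Proof. exact: orbC. Qed.

Definition covered (p : nat) (G : rel 'I_p) (x y : 'I_p) : Prop :=
  forall z, G z y = (z == x) || G z x.

Definition reversed_edges (p : nat) (G G' : rel 'I_p) : {set 'I_p * 'I_p} :=
  [set e | G e.1 e.2 && G' e.2 e.1].

(* Chickering's choice: y is a lowest head (for f) of an edge of G reversed in
   G', and x the highest tail of such an edge into y. *)
Section ReversedCoveredEdge.
Variables (p : nat) (G G' : rel 'I_p) (f f' : 'I_p -> nat).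
Hypotheses (hf : ranking G f) (hf' : ranking G' f').
Hypothesis hME : markov_equivalent G G'.
Variables x y : 'I_p.
Hypotheses (hxy : G x y) (hyx : G' y x).
Hypothesis y_min : forall a b, G a b -> G' b a -> f y <= f b.
Hypothesis x_max : forall a, G a y -> G' y a -> f a <= f x.

Lemma parent_target_parent_source z : z != x -> G z y -> G z x.
Proof.
case: hME => hadj hv hzx hzy.
have [hzx_adj|hzx_nadj] := boolP (adjacent G z x); last first.
  have : vstructure G z y x by rewrite /vstructure hzy hxy hzx hzx_nadj.
  by rewrite hv => /and4P[_ h _ _]; rewrite (ranking_asym hf' hyx) in h.
case/orP: hzx_adj => [//|hxz]; exfalso.
have fxz := hf hxz.
have : adjacent G' z y by rewrite -hadj /adjacent hzy.
case/orP => [h'zy|h'yz]; last by have := x_max hzy h'yz; rewrite leqNgt fxz.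
have : adjacent G' x z by rewrite -hadj /adjacent hxz.
case/orP => [h'xz|h'zx].
  by have := hf' hyx; have := hf' h'xz; have := hf' h'zy; lia.
by have := y_min hxz h'zx; rewrite leqNgt (hf hzy).
Qed.

Lemma parent_source_parent_target z : G z x -> G z y.
Proof.
case: hME => hadj hv hzx.
have fzx := hf hzx; have fxy := hf hxy.
have [hzy_adj|hzy_nadj] := boolP (adjacent G z y).
  case/orP: hzy_adj => [//|hyz].
  by have := hf hyz; lia.
have : adjacent G' z x by rewrite -hadj /adjacent hzx.
case/orP => [h'zx|h'xz]; last by have := y_min hzx h'xz; lia.
have hzy : z != y by apply: contraTneq hzx => ->; rewrite (ranking_asym hf hxy).
have : vstructure G' z x y by rewrite /vstructure h'zx hyx hzy -hadj hzy_nadj.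
by rewrite -hv => /and4P[_ h _ _]; rewrite (ranking_asym hf hxy) in h.
Qed.

Lemma covered_extremal_edge : covered G x y.
Proof.
move=> z; case: (eqVneq z x) => [->|hzx] /=; first by rewrite hxy.
apply/idP/idP; [exact: parent_target_parent_source | exact: parent_source_parent_target].
Qed.

End ReversedCoveredEdge.

Lemma exists_reversed_covered_edge (p : nat) (G G' : rel 'I_p) :
  is_dag G -> is_dag G' -> markov_equivalent G G' ->
  reversed_edges G G' != set0 ->
  exists x y, [/\ G x y, G' y x & covered G x y].
Proof.
move=> /dag_ranking[f hf] /dag_ranking[f' hf'] hME /set0Pn[[a0 b0]].
rewrite inE /= => hab0.
pose head_rev y := [exists x, G x y && G' y x].
have head0 : head_rev b0 by apply/existsP; exists a0.
case: (arg_minnP f head0) => y /existsP[x0 hx0] y_min.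
case: (@arg_maxnP _ x0 (fun x => G x y && G' y x) f hx0) => x /andP[hxy hyx] x_max.
have y_min' a b : G a b -> G' b a -> f y <= f b.
  by move=> hab hba; apply: y_min; apply/existsP; exists a; rewrite hab.
have x_max' a : G a y -> G' y a -> f a <= f x.
  by move=> hay hya; apply: x_max; rewrite hay.
have hcov := covered_extremal_edge hf hf' hME hxy hyx y_min' x_max'.
by exists x, y.
Qed.

Definition rev_edge (p : nat) (G : rel 'I_p) (x y : 'I_p) : rel 'I_p :=
  fun a b => ((a == y) && (b == x)) || (G a b && ~~ ((a == x) && (b == y))).

Section CoveredEdgeReversal.
Variables (p : nat) (G : rel 'I_p) (f : 'I_p -> nat) (x y : 'I_p).
Hypotheses (hf : ranking G f) (hxy : G x y) (hcov : covered G x y).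

Let hyx : y != x. Proof. by apply: contraTneq hxy => ->; rewrite (ranking_irr x hf). Qed.

Lemma rev_edge_to_source a : rev_edge G x y a x = (a == y) || G a x.
Proof. by rewrite /rev_edge eqxx [x == y]eq_sym (negbTE hyx) andbF /= !andbT. Qed.

Lemma rev_edge_to_target a : rev_edge G x y a y = (a != x) && G a y.
Proof. by rewrite /rev_edge eqxx (negbTE hyx) andbF andbT andbC. Qed.

Lemma rev_edge_to_other a c : c != x -> c != y -> rev_edge G x y a c = G a c.
Proof. by move=> /negbTE cx /negbTE cy; rewrite /rev_edge cx cy !andbF andbT. Qed.

Lemma rev_edge_ranking :
  ranking (rev_edge G x y)
    (fun z => if z == y then (f x).*2 else if z == x then (f x).*2.+1 else (f z).*2).
Proof.
have fxy := hf hxy.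
move=> a b; have [->|bx] := eqVneq b x.
  rewrite rev_edge_to_source [x == y]eq_sym (negbTE hyx).
  case: (eqVneq a y) => [_|ay] /= hax; first by rewrite ltnSn.
  have ax : a != x by apply: contraTneq hax => ->; rewrite (ranking_irr x hf).
  by rewrite (negbTE ax); have := hf hax; lia.
have [->|by_] := eqVneq b y.
  rewrite rev_edge_to_target => /andP[ax hay].
  have hax : G a x by move: hay; rewrite hcov (negbTE ax).
  have ay : a != y by apply: contraTneq hay => ->; rewrite (ranking_irr y hf).
  by rewrite (negbTE ay) (negbTE ax); have := hf hax; lia.
rewrite rev_edge_to_other // => hab; have := hf hab.
by case: eqVneq => [->|_]; [|case: eqVneq => [->|_]]; lia.
Qed.

Lemma adjacent_rev_edge a b : adjacent (rev_edge G x y) a b = adjacent G a b.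
Proof.
have irr z : G z z = false := ranking_irr z hf.
have Gyx : G y x = false := ranking_asym hf hxy.
rewrite /adjacent /rev_edge.
case: (eqVneq a x) => [->|ax]; [|case: (eqVneq a y) => [->|ay]];
  (case: (eqVneq b x) => [->|bx]; [|case: (eqVneq b y) => [->|by_]]);
  rewrite ?eqxx ?irr ?hxy ?Gyx ?(negbTE hyx) ?[x == y]eq_sym ?(negbTE hyx)
    ?andbT ?andbF ?orbT ?orbF //.
Qed.

Lemma vstructure_rev_edge a c b :
  vstructure (rev_edge G x y) a c b = vstructure G a c b.
Proof.
rewrite /vstructure adjacent_rev_edge.
have [->|cx] := eqVneq c x; last have [->|cy] := eqVneq c y; last first.
- by rewrite !rev_edge_to_other.
- rewrite !rev_edge_to_target.
  have adj_x z : z != x -> G z y -> adjacent G z x.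
    by move=> zx; rewrite hcov (negbTE zx) /adjacent /= => ->.
  have [->|ax] := eqVneq a x; last have [->|bx] := eqVneq b x;
    rewrite ?eqxx ?andbT /= ?andbF //.
  + apply/esym/negbTE/negP => /and4P[_ hby xb /negP[]].
    by rewrite adjacent_sym adj_x // eq_sym.
  + by apply/esym/negbTE/negP => /and4P[hay _ ax' /negP[]]; rewrite adj_x.
rewrite !rev_edge_to_source.
have adj_y z : G z x -> adjacent G z y by move=> hzx; rewrite /adjacent hcov hzx orbT.
have [->|ay] := eqVneq a y; last have [->|by_] := eqVneq b y;
  rewrite ?eqxx ?(ranking_asym hf hxy) /= ?andbF //.
- apply/negbTE/negP => /and3P[hb yb /negP[]].
  by move: hb; rewrite adjacent_sym eq_sym (negbTE yb) /= => /adj_y.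
- by apply/negbTE/negP => /and3P[/adj_y ? _ /negP[]].
Qed.

Lemma markov_equivalent_rev_edge : markov_equivalent G (rev_edge G x y).
Proof. by split=> *; rewrite ?adjacent_rev_edge ?vstructure_rev_edge. Qed.

End CoveredEdgeReversal.

Lemma reversed_edges_rev_edge (p : nat) (G G' : rel 'I_p) f' x y :
  ranking G' f' -> G x y -> G' y x ->
  #|reversed_edges (rev_edge G x y) G'| < #|reversed_edges G G'|.
Proof.
move=> hf' hxy hyx; apply/proper_card/properP; split.
  apply/subsetP => -[a b]; rewrite !inE /rev_edge /=.
  case/andP => /orP[/andP[/eqP-> /eqP->]|/andP[hab _]] h'; last by rewrite hab h'.
  by rewrite (ranking_asym hf' hyx) in h'.
exists (x, y); first by rewrite !inE /= hxy hyx.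
have hxy' : x != y by apply: contraTneq hyx => ->; rewrite (ranking_irr y hf').
by rewrite !inE /= /rev_edge (negbTE hxy') !eqxx andbF.
Qed.

Lemma reversed_edges0 (p : nat) (G G' : rel 'I_p) :
  markov_equivalent G G' -> reversed_edges G G' = set0 -> G' =2 G.
Proof.
move=> [hadj _] h0 a b.
have nrev u v : G u v -> G' v u = false.
  by move=> huv; apply/negP => hvu; have := in_set0 (u, v); rewrite -h0 inE huv hvu.
apply/idP/idP => h.
  have := hadj a b; rewrite /adjacent h /= => /orP[//|hba].
  by rewrite nrev in h.
have := hadj a b; rewrite /adjacent h /= => /esym/orP[//|h'ba].
by rewrite nrev in h'ba.
Qed.

Local Open Scope ring_scope.

Definition supported (R : nmodType) (p : nat) (G : rel 'I_p) (B : 'M[R]_p) : Prop :=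
  forall k j, ~~ G k j -> B k j = 0.

Definition posdiag (R : numDomainType) (p : nat) (Om : 'M[R]_p) : Prop :=
  is_diag_mx Om /\ forall j, 0 < Om j j.

Definition sem_precision (R : fieldType) (p : nat) (B Om : 'M[R]_p) : 'M[R]_p :=
  \sum_(j < p) (Om j j)^-1 *: (col j (1%:M - B) *m (col j (1%:M - B))^T).

Lemma rank2_swap (R : fieldType) (n : nat) (u w : 'cV[R]_n) (dx dy b m : R) :
  m = dx + dy * b ^+ 2 -> m != 0 ->
  dx *: (u *m u^T) + dy *: ((w - b *: u) *m (w - b *: u)^T) =
  m *: ((u - (dy * b / m) *: w) *m (u - (dy * b / m) *: w)^T)
  + (dx * dy / m) *: (w *m w^T).
Proof.
move=> -> hm; apply/matrixP => i j; rewrite !mxE !big_ord1 !mxE.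
by field.
Qed.

Section CoveredEdgeReparametrization.
Variables (R : realFieldType) (p : nat) (G : rel 'I_p) (f : 'I_p -> nat).
Variables (x y : 'I_p) (B Om : 'M[R]_p).
Hypotheses (hf : ranking G f) (hxy : G x y) (hcov : covered G x y).
Hypotheses (hB : supported G B) (hOm : posdiag Om).

Let hyx : y != x. Proof. by apply: contraTneq hxy => ->; rewrite (ranking_irr x hf). Qed.

Let u : 'cV[R]_p := col x (1%:M - B).
Let b : R := B x y.
Let w : 'cV[R]_p := col y (1%:M - B) + b *: u.
Let m : R := (Om x x)^-1 + (Om y y)^-1 * b ^+ 2.
Let t : R := (Om y y)^-1 * b / m.

Let m_gt0 : 0 < m.
Proof.
have [_ Om_gt0] := hOm.
have hx : 0 < (Om x x)^-1 by rewrite invr_gt0.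
have hy : 0 <= (Om y y)^-1 by rewrite invr_ge0 ltW.
by rewrite /m -[0]addr0 ltr_leD // mulr_ge0 // sqr_ge0.
Qed.

(* Column y of 1 - B is w - b u, where w is supported on y and the parents of
   x; rank2_swap makes w the new column y and u - t w the new column x. *)
Definition rev_coef : 'M[R]_p :=
  \matrix_(k, j) if j == x then B k x + t * w k 0
                 else if j == y then 1%:M k y - w k 0 else B k j.

Definition rev_var : 'M[R]_p :=
  diag_mx (\row_j if j == x then m^-1
                  else if j == y then m * (Om x x * Om y y) else Om j j).

Lemma col_rev_coef_source : col x (1%:M - rev_coef) = u - t *: w.
Proof. by apply/matrixP => k i; rewrite !mxE eqxx; ring. Qed.

Lemma col_rev_coef_target : col y (1%:M - rev_coef) = w.
Proof. by apply/matrixP => k i; rewrite !mxE eqxx (negbTE hyx); ring. Qed.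

Lemma col_rev_coef_other j :
  j != x -> j != y -> col j (1%:M - rev_coef) = col j (1%:M - B).
Proof. by move=> /negbTE jx /negbTE jy; apply/matrixP => k i; rewrite !mxE jx jy. Qed.

Let wE k : w k 0 = (k == y)%:R - B k y + b * ((k == x)%:R - B k x).
Proof. by rewrite !mxE. Qed.

Let Bxx : B x x = 0.
Proof. by rewrite hB ?(ranking_irr x hf). Qed.

Lemma supported_rev_coef : supported (rev_edge G x y) rev_coef.
Proof.
move=> k j; rewrite mxE.
have [->|jx] := eqVneq j x.
  rewrite (rev_edge_to_source hf hxy) negb_or => /andP[/negbTE ky kx].
  rewrite wE hB // ky add0r.
  have [->|kx'] := eqVneq k x; first by rewrite /b /=; ring.
  have Bky : B k y = 0 by apply: hB; rewrite hcov (negbTE kx').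
  by rewrite Bky /=; ring.
have [->|jy] := eqVneq j y; last by rewrite rev_edge_to_other //; apply: hB.
rewrite (rev_edge_to_target hf hxy) negb_and negbK wE !mxE.
have [->|kx] := eqVneq k x.
  by move=> _; rewrite Bxx [x == y]eq_sym (negbTE hyx) /b /=; ring.
rewrite hcov (negbTE kx) /= => nGkx; have Bkx := hB nGkx.
have Bky : B k y = 0 by apply: hB; rewrite hcov (negbTE kx).
by rewrite Bkx Bky /=; ring.
Qed.

Let rev_varE j : rev_var j j =
  if j == x then m^-1 else if j == y then m * (Om x x * Om y y) else Om j j.
Proof. by rewrite !mxE eqxx mulr1n. Qed.

Lemma posdiag_rev_var : posdiag rev_var.
Proof.
have [_ Om_gt0] := hOm.
split=> [|j]; first exact: diag_mx_is_diag.
rewrite rev_varE; case: eqVneq => _; first by rewrite invr_gt0.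
by case: eqVneq => _ //; rewrite !mulr_gt0.
Qed.

Lemma sem_precision_rev : sem_precision rev_coef rev_var = sem_precision B Om.
Proof.
have [_ Om_gt0] := hOm.
rewrite /sem_precision (bigD1 x) //= (bigD1 y) //=.
rewrite [in RHS](bigD1 x) //= [in RHS](bigD1 y) //=.
rewrite !addrA; congr (_ + _); last first.
  apply: eq_bigr => j /andP[jx jy].
  by rewrite rev_varE col_rev_coef_other // (negbTE jx) (negbTE jy).
have -> : col y (1%:M - B) = w - b *: u by rewrite addrK.
rewrite (@rank2_swap _ _ u w (Om x x)^-1 (Om y y)^-1 b m) //; last exact: lt0r_neq0.
rewrite !rev_varE eqxx (negbTE hyx) eqxx col_rev_coef_source col_rev_coef_target invrK.
by congr (_ + _ *: _); rewrite !invfM; ring.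
Qed.

Lemma det_rev_var : \det rev_var = \det Om.
Proof.
have [Om_diag _] := hOm.
rewrite !det_trig ?is_diag_mx_is_trig ?diag_mx_is_diag //.
rewrite (bigD1 x) //= (bigD1 y) //= [in RHS](bigD1 x) //= [in RHS](bigD1 y) //=.
rewrite !rev_varE eqxx (negbTE hyx) eqxx !mulrA mulVf ?mul1r; last exact: lt0r_neq0.
congr (_ * _); apply: eq_bigr => j /andP[jx jy].
by rewrite rev_varE (negbTE jx) (negbTE jy).
Qed.

End CoveredEdgeReparametrization.

Lemma markov_equivalent_reparam (R : realFieldType) (p : nat) (G G' : rel 'I_p)
    (B Om : 'M[R]_p) :
  is_dag G -> is_dag G' -> markov_equivalent G G' ->
  supported G B -> posdiag Om ->
  exists B' Om', [/\ supported G' B', posdiag Om',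
    sem_precision B' Om' = sem_precision B Om & \det Om' = \det Om].
Proof.
move=> hG hG' hME; have [k] := ubnP #|reversed_edges G G'|.
elim: k G B Om hG hME => // k IH G B Om hG hME lt_k hB hOm.
have [/(reversed_edges0 hME) eqG'|ne0] := eqVneq (reversed_edges G G') set0.
  by exists B, Om; split=> // a c; rewrite eqG'; apply: hB.
have [x [y [hxy hyx hcov]]] := exists_reversed_covered_edge hG hG' hME ne0.
have [f hf] := dag_ranking hG; have [f' hf'] := dag_ranking hG'.
have hME' : markov_equivalent (rev_edge G x y) G'.
  apply: markov_equivalent_trans hME.
  exact: markov_equivalent_sym (markov_equivalent_rev_edge hf hxy hcov).
have lt_k' : (#|reversed_edges (rev_edge G x y) G'| < k)%N.
  exact: leq_trans (reversed_edges_rev_edge hf' hxy hyx) lt_k.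
have [B' [Om' [hB' hOm' hprec hdet]]] :=
  IH _ _ _ (ranking_dag (rev_edge_ranking hf hxy hcov)) hME' lt_k'
    (supported_rev_coef Om hf hxy hcov hB) (posdiag_rev_var x y B hOm).
exists B', Om'; split=> //.
  by rewrite hprec (sem_precision_rev B hf hxy hOm).
by rewrite hdet (det_rev_var B hf hxy hOm).
Qed.

Lemma Smat_sem_precision (R : realType) (n p : nat) (X : 'M[R]_(n, p))
    (B Om : 'M[R]_p) :
  Smat X B Om = p%:R^-1 *: (X *m sem_precision B Om *m X^T).
Proof.
rewrite /Smat /sem_precision mulmx_sumr mulmx_suml; congr (_ *: _).
apply: eq_bigr => j _.
have -> : X - X *m B = X *m (1%:M - B) by rewrite mulmxBr mulmx1.
have colM : col j (X *m (1%:M - B)) = X *m col j (1%:M - B) by rewrite !colE mulmxA.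
by rewrite colM trmx_mul -scalemxAr -scalemxAl !mulmxA.
Qed.

Lemma negloglik_sem_precision (R : realType) (n p : nat) (X : 'M[R]_(n, p))
    (B Om B' Om' : 'M[R]_p) (Theta : 'M[R]_n) :
  sem_precision B' Om' = sem_precision B Om -> \det Om' = \det Om ->
  negloglik X B' Om' Theta = negloglik X B Om Theta.
Proof. by move=> hK hdet; rewrite /negloglik !det_inv hdet !Smat_sem_precision hK. Qed.

Lemma feasible_markov_equivalent (R : realType) (n p : nat) (X : 'M[R]_(n, p))
    (A : 'M[R]_n) (G G' : rel 'I_p) (B Om : 'M[R]_p) (Theta : 'M[R]_n) :
  is_dag G -> is_dag G' -> markov_equivalent G G' -> feasible A G B Om Theta ->
  exists B' Om', feasible A G' B' Om' Theta /\
    negloglik X B' Om' Theta = negloglik X B Om Theta.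
Proof.
move=> hG hG' hME [hB [Om_diag [Om_gt0 hTheta]]].
have [B' [Om' [hB' [Om'_diag Om'_gt0] hK hdet]]] :=
  markov_equivalent_reparam hG hG' hME hB (conj Om_diag Om_gt0).
by exists B', Om'; split=> //; apply: negloglik_sem_precision.
Qed.

Theorem theorem1 (R : realType) (n p : nat) (X : 'M[R]_(n, p)) (A : 'M[R]_n)
  (hA01 : forall i j, A i j = 0 \/ A i j = 1) (hAsym : A^T = A)
  (G1 G2 : rel 'I_p) (hG1 : is_dag G1) (hG2 : is_dag G2)
  (hME : markov_equivalent G1 G2)
  (B1 Omega1 : 'M[R]_p) (Theta1 : 'M[R]_n)
  (B2 Omega2 : 'M[R]_p) (Theta2 : 'M[R]_n)
  (hmle1 : is_mle X A G1 B1 Omega1 Theta1)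
  (hmle2 : is_mle X A G2 B2 Omega2 Theta2) :
  negloglik X B1 Omega1 Theta1 = negloglik X B2 Omega2 Theta2.
Proof.
case: hmle1 => feas1 min1; case: hmle2 => feas2 min2.
have [B1' [Om1' [feas1' val1]]] :=
  feasible_markov_equivalent X hG1 hG2 hME feas1.
have [B2' [Om2' [feas2' val2]]] :=
  feasible_markov_equivalent X hG2 hG1 (markov_equivalent_sym hME) feas2.
apply/eqP; rewrite eq_le -{1}val2 -{2}val1.
by rewrite min1 ?min2.
Qed.
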